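(* Let $L$ be a slim semimodular lattice of length $n$ and let $D$ be a planar diagram of $L$ with left boundary chain $0=c_0\prec\dots\prec c_n=1$ and right boundary chain $0=d_0\prec\dots\prec d_n=1$. Let $\pi_1,\pi_2,\pi_3$ be the permutations associated with $D$ as defined below. Then $\pi_1=\pi_2=\pi_3$.
   Context: A finite lattice is slim if its join-irreducible elements (including $0$) contain no three-element antichain; semimodular means $a\prec b$ implies $a\vee c\preceq b\vee c$. Slim lattices are planar; in a planar diagram of a slim semimodular lattice all cells (minimal regions bounded by edges) are 4-cells, i.e. four-element cover-preserving sublattices of length 2. Diagrams are considered up to boundary similarity (an isomorphism preserving left and right boundary chains). $\pi_1$: for $i\in\{1,\dots,n\}$ let $I_0=[c_{i-1},c_i]$; if $I_t$ is defined and is the left-hand (lower or upper) edge of a 4-cell lying to its right, let $I_{t+1}$ be the opposite edge of that 4-cell; the sequence $I_0,\dots,I_m$ (the trajectory) ends on the right boundary chain at $I_m=[d_{j-1},d_j]$, and $\pi_1(i)=j$ (this is known to be well defined and a permutation). $\pi_2$: for $i\in\{1,\dots,n\}$ take a meet-irreducible $u\in L$, $u\neq1$, such that $c_i$ is the smallest element of the left boundary chain not $\le u$; let $d_j$ be the smallest element of the right boundary chain not $\le u$; $\pi_2(i)=j$. $\pi_3$: let $G$ be the direct product of the chains $\{c_0,\dots,c_n\}$ and $\{d_0,\dots,d_n\}$, writing $c_i\vee d_j$ for the pair $(c_i,d_j)$; let $\eta\colon G\to L$, $c_i\vee_G d_j\mapsto c_i\vee_L d_j$, and let $\beta_D$ be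 the kernel of $\eta$. For a join-congruence $\alpha$ of $G$ and $i,j\ge1$, the 4-cell $\{c_{i-1}\vee d_{j-1},c_{i-1}\vee d_j,c_i\vee d_{j-1},c_i\vee d_j\}$ is a source cell of $\alpha$ if $c_{i-1}\vee d_j$, $c_i\vee d_{j-1}$, $c_i\vee d_j$ lie in one $\alpha$-class not containing $c_{i-1}\vee d_{j-1}$. $\pi_3(i)=j$ iff the 4-cell with top $c_i\vee d_j$ is a source cell of $\beta_D$. *)

From HB Require Import structures.
From mathcomp Require Import all_boot all_order all_fingroup.
Set Implicit Arguments. Unset Strict Implicit. Unset Printing Implicit Defensive.
Import Order.Theory.
Local Open Scope order_scope.

Section LatticeNotions.
Context {disp : Order.disp_t} {T : tbLatticeType disp}.

Definition covers (x y : T) : Prop := x < y /\ forall z, ~ (x < z /\ z < y).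

Definition incomp (x y : T) : Prop := ~ (x <= y) /\ ~ (y <= x).

(* join-irreducible; with this convention 0 is join-irreducible, as in the paper *)
Definition join_irr (x : T) : Prop := forall y z, x = y `|` z -> x = y \/ x = z.

(* meet-irreducible (1 satisfies this trivially; the paper adds u <> 1 separately) *)
Definition meet_irr (x : T) : Prop := forall y z, x = y `&` z -> x = y \/ x = z.

Definition slim : Prop :=
  forall x y z, join_irr x -> join_irr y -> join_irr z ->
    ~ (incomp x y /\ incomp y z /\ incomp x z).

Definition semimodular : Prop :=
  forall a b c, covers a b -> covers (a `|` c) (b `|` c) \/ a `|` c = b `|` c.

Definition lattice_length (n : nat) : Prop :=
  (exists s : seq T, sorted <%O s /\ size s = n.+1) /\
  (forall s : seq T, sorted <%O s -> (size s <= n.+1)%N).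

(* A planar diagram up to (boundary) similarity, encoded by its left-right
   relation: [lr x y] means "x is strictly to the left of y" (only for
   incomparable x, y).  lr must be total and asymmetric on incomparable pairs,
   and both (<=) ∪ lr and (<=) ∪ lr^{-1} must be transitive (Kelly–Rival). *)
Definition planar_diagram (lr : T -> T -> Prop) : Prop :=
  [/\ (forall x y, lr x y -> incomp x y),
      (forall x y, incomp x y -> lr x y \/ lr y x),
      (forall x y, ~ (lr x y /\ lr y x)),
      (forall x y z, (x <= y \/ lr x y) -> (y <= z \/ lr y z) -> (x <= z \/ lr x z))
    & (forall x y z, (x <= y \/ lr y x) -> (y <= z \/ lr z y) -> (x <= z \/ lr z x))].

Definition left_boundary (lr : T -> T -> Prop) (c : nat -> T) (n : nat) : Prop :=
  [/\ c 0%N = \bot, c n = \top,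
      (forall k, (k < n)%N -> covers (c k) (c k.+1))
    & (forall k y, (k <= n)%N -> incomp (c k) y -> lr (c k) y)].

Definition right_boundary (lr : T -> T -> Prop) (d : nat -> T) (n : nat) : Prop :=
  [/\ d 0%N = \bot, d n = \top,
      (forall k, (k < n)%N -> covers (d k) (d k.+1))
    & (forall k y, (k <= n)%N -> incomp (d k) y -> lr y (d k))].

(* A (4-)cell of the diagram with bottom o, left corner a, right corner b, top t:
   a covering square with a to the left of b and no element inside the region. *)
Definition cell (lr : T -> T -> Prop) (o a b t : T) : Prop :=
  [/\ covers o a, covers a t, covers o b, covers b t
    & lr a b /\ forall x, o < x -> x < t -> x <> a -> x <> b -> ~ (lr a x /\ lr x b)].

(* one step of a trajectory: e is the left-hand (lower or upper) edge of a
   4-cell lying to its right, and e' is the opposite edge of that cell *)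
Definition traj_step (lr : T -> T -> Prop) (e e' : T * T) : Prop :=
  exists o a b t, cell lr o a b t /\
    ((e = (o, a) /\ e' = (b, t)) \/ (e = (a, t) /\ e' = (o, b))).

Definition pi1_rel (lr : T -> T -> Prop) (c d : nat -> T) (i j : nat) : Prop :=
  exists es : seq (T * T),
    let e0 := (c i.-1, c i) in
    [/\ (forall k, (k < size es)%N ->
           traj_step lr (nth e0 (e0 :: es) k) (nth e0 es k)),
        last e0 es = (d j.-1, d j)
      & forall e', ~ traj_step lr (last e0 es) e'].

Definition smallest_not_le (c : nat -> T) (n : nat) (u : T) (i : nat) : Prop :=
  [/\ (i <= n)%N, ~ (c i <= u) & forall k, (k < i)%N -> c k <= u].

Definition pi2_rel (c d : nat -> T) (n i j : nat) : Prop :=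
  exists u : T, [/\ meet_irr u, u <> \top,
                    smallest_not_le c n u i & smallest_not_le d n u j].

(* G = chain {c_0..c_n} × chain {d_0..d_n}; the pair (i, j) stands for c_i ∨_G d_j *)
Definition eta (c d : nat -> T) (p : nat * nat) : T := c p.1 `|` d p.2.

Definition beta_D (c d : nat -> T) (p q : nat * nat) : Prop := eta c d p = eta c d q.

End LatticeNotions.

Definition source_cell (alpha : nat * nat -> nat * nat -> Prop) (i j : nat) : Prop :=
  [/\ (1 <= i)%N, (1 <= j)%N,
      alpha (i.-1, j) (i, j), alpha (i, j.-1) (i, j)
    & ~ alpha (i.-1, j.-1) (i, j)].

Definition pi3_rel {disp : Order.disp_t} {T : tbLatticeType disp}
  (c d : nat -> T) (i j : nat) : Prop := source_cell (beta_D c d) i j.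

From Pilot Require Import Defs.
From HB Require Import structures.
From mathcomp Require Import all_boot all_order all_fingroup.
From Stdlib Require Import Relation_Operators Operators_Properties.
Import Order.Theory.
Local Open Scope order_scope.
Set Implicit Arguments. Unset Strict Implicit.

(* The permutation is read off the grid of joins c_i ∨ d_j.  By semimodularity every unit square
   of the grid is balanced: its two boundary paths from bottom to top make the same number of
   covering steps, the other steps being equalities.  In row i the edges [c_i ∨ d_k, c_(i+1) ∨ d_k]
   are proper up to some k = j and collapse from then on; the square where this happens is the only
   source cell of β_D in its row and, by balance, in its column.  This gives π3 as a permutation.
   For π2, if c_(i+1) and d_(j+1) are the first boundary elements not below a meet-irreducible u,
   then u lies above c_i ∨ d_j but above neither of its upper neighbours in the grid; slimness (or
   meet-irreducibility, if u = c_i ∨ d_j) forces these neighbours to coincide, which is the source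
   condition.  For π1, slimness makes the property "x ∨ w = y ∨ w" of an edge [x, y] invariant
   along trajectories, which pins down the last edge; conversely, the trajectory from [c_i, c_(i+1)]
   crosses the cells of row i up to the source cell and then descends its column to [d_j, d_(j+1)]. *)

(* [HB.structures] also exports an [eta]. *)
Local Notation eta := Defs.eta.

#[local] Arguments clos_refl_trans {A} R x _.
#[local] Arguments rt_step {A R x y}.
#[local] Arguments rt_refl {A R x}.
#[local] Arguments rt_trans {A R x y z}.
#[local] Arguments clos_rt_rt1n {A R x y}.

Lemma clos_refl_transP (A : Type) (R : A -> A -> Prop) x y :
  clos_refl_trans R x y <->
  exists es : seq A,
    (forall k, (k < size es)%N -> R (nth x (x :: es) k) (nth x es k)) /\ last x es = y.
Proof.
have shift (z0 z : A) es : (forall k, (k < size (z :: es))%N ->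
      R (nth z0 (z0 :: z :: es) k) (nth z0 (z :: es) k)) ->
    R z0 z /\ forall k, (k < size es)%N -> R (nth z (z :: es) k) (nth z es k).
  move=> steps; split=> [|k k_es]; first exact: steps 0%N isT.
  have := steps k.+1 k_es; rewrite /= (set_nth_default z z0 k_es).
  by rewrite (set_nth_default z z0 (ltnW k_es : (k < size (z :: es))%N)).
split.
  move=> /clos_rt_rt1n rxy; elim: rxy => [|x0 z y0 xz _ [es [steps es_y]]]; first by exists [::].
  exists (z :: es); split=> // [[|k]] //=; rewrite ltnS => k_es.
  rewrite (set_nth_default z x0 k_es).
  by rewrite (set_nth_default z x0 (ltnW k_es : (k < size (z :: es))%N)); exact: steps.
case=> es []; elim: es x => [x _ <-|z es IH x steps es_y]; first exact: rt_refl.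
have [xz steps'] := shift _ _ _ steps.
exact: rt_trans (rt_step xz) (IH z steps' es_y).
Qed.

Section Covers.
Context {disp : Order.disp_t} {L : tbLatticeType disp}.
Implicit Types o a b t w x y z : L.

Lemma covers_lt x y : covers x y -> x < y.
Proof. by case. Qed.

Lemma covers_le x y : covers x y -> x <= y.
Proof. by move/covers_lt/ltW. Qed.

Lemma covers_neq x y : covers x y -> x != y.
Proof. by move/covers_lt; rewrite lt_neqAle => /andP[]. Qed.

Lemma covers_between x y z : covers x y -> x <= z -> z <= y -> z = x \/ z = y.
Proof.
case=> _ noz xz zy; have [->|nzx] := eqVneq z x; first by left.
have [->|nzy] := eqVneq z y; first by right.
by case: (noz z); rewrite lt_def nzx xz lt_neqAle nzy zy.
Qed.

Lemma covers_le_eq o a b : covers o a -> covers o b -> a <= b -> a = b.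
Proof.
move=> oa ob ab; have [ao|//] := covers_between ob (covers_le oa) ab.
by move: (covers_neq oa); rewrite ao eqxx.
Qed.

Lemma covers_nle o a b : covers o a -> covers o b -> a != b -> ~~ (a <= b).
Proof. by move=> oa ob nab; apply: contra nab => /(covers_le_eq oa ob) ->. Qed.

Lemma covers_meet_le o a w : covers o a -> o <= w -> ~~ (a <= w) -> a `&` w <= o.
Proof.
move=> oa ow aw; have o_aw : o <= a `&` w by rewrite lexI (covers_le oa) ow.
have [->|aw_a] := covers_between oa o_aw (leIl a w); first exact: lexx.
by move: (leIr w a); rewrite aw_a (negbTE aw).
Qed.

Lemma covers_join a b t : covers a t -> covers b t -> a != b -> a `|` b = t.
Proof.
move=> at_ bt nab; have abt : a `|` b <= t by rewrite leUx !covers_le.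
have [ab_a|//] := covers_between at_ (leUl a b) abt.
have ba : b <= a by rewrite -ab_a leUr.
have [a_b|a_t] := covers_between bt ba (covers_le at_).
  by rewrite a_b eqxx in nab.
by move: (covers_neq at_); rewrite a_t eqxx.
Qed.

Lemma join_eq_le x y w : x <= y -> (x `|` w == y `|` w) = (y <= x `|` w).
Proof.
move=> xy; apply/eqP/idP => [->|yxw]; first exact: leUl.
by apply: le_anti; rewrite !leUx yxw leUr (le_trans xy (leUl _ _)) leUr.
Qed.

Definition cover_or_eq (x y : L) : Prop :=
  x <= y /\ (x != y -> covers x y).

Lemma semimodular_join_cover z a b :
  semimodular (T := L) -> covers a b -> cover_or_eq (a `|` z) (b `|` z).
Proof.
move=> sm ab; split; first by rewrite leUx leUr (le_trans (covers_le ab) (leUl _ _)).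
by case: (sm a b z ab) => [//|->]; rewrite eqxx.
Qed.

Lemma square_balanced p q r t :
  cover_or_eq p q -> cover_or_eq p r -> q <= t -> r <= t ->
  (p = q -> r = t) -> (p = r -> q = t) ->
  ((p != q) + (q != t) = (p != r) + (r != t))%N.
Proof.
move=> [pq cpq] [pr cpr] qt rt pq_rt pr_qt.
have [p_q|npq] := eqVneq p q; first by rewrite -(pq_rt p_q) -p_q !eqxx addn0.
have [p_r|npr] := eqVneq p r; first by rewrite -(pr_qt p_r) -p_r npq !eqxx.
suff -> : (q == t) = (r == t) by [].
apply/eqP/eqP.
- move=> q_t; have rq : r <= q by rewrite q_t.
  have [r_p|->//] := covers_between (cpq npq) pr rq.
  by rewrite r_p eqxx in npr.
- move=> r_t; have qr : q <= r by rewrite r_t.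
  have [q_p|->//] := covers_between (cpr npr) pq qr.
  by rewrite q_p eqxx in npq.
Qed.

Definition cover_chain (c : nat -> L) (n : nat) :=
  [/\ c 0%N = \bot, c n = \top & forall k, (k < n)%N -> covers (c k) (c k.+1)].

Lemma cover_chain_step (c : nat -> L) n k : cover_chain c n -> (k < n)%N -> c k <= c k.+1.
Proof. by case=> _ _ cov kn; exact: covers_le (cov k kn). Qed.

Lemma cover_chain_le (c : nat -> L) n i k :
  cover_chain c n -> (k <= i)%N -> (i <= n)%N -> c k <= c i.
Proof.
move=> hc; elim: i => [|i IH] ki iS; first by move: ki; rewrite leqn0 => /eqP ->.
move: ki; rewrite leq_eqVlt => /orP[/eqP -> //|ki].
exact: le_trans (IH ki (ltnW iS)) (cover_chain_step hc iS).
Qed.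

Lemma smallest_not_le_exists (c : nat -> L) n u : cover_chain c n -> u != \top ->
  exists2 k, (k < n)%N & smallest_not_le c n u k.+1.
Proof.
case=> c0 cn _ ut; have cn_u : ~~ (c n <= u) by rewrite cn le1x.
have [k ck_u k_min] := ex_minnP (ex_intro (fun k => ~~ (c k <= u)) n cn_u).
case: k ck_u k_min => [|k] ck_u k_min; first by rewrite c0 le0x in ck_u.
exists k; first exact: k_min _ cn_u.
split; [exact: k_min _ cn_u | exact/negP |].
by move=> m mk; apply: contraTT mk => /k_min; rewrite ltnNge => ->.
Qed.

End Covers.

Section Slim.
Context {disp : Order.disp_t} {L : finTBLatticeType disp}.
Implicit Types o a b w x y z : L.

Definition down_card z := #|[set y : L | y <= z]|.

Lemma down_card_lt y z : y < z -> (down_card y < down_card z)%N.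
Proof.
move=> yz; apply/proper_card/properP; split.
  by apply/subsetP=> v; rewrite !inE => vy; apply: le_trans vy (ltW yz).
by exists z; rewrite !inE ?lexx ?(lt_geF yz).
Qed.

Lemma join_irr_below a o : ~~ (a <= o) -> exists z, [/\ join_irr z, z <= a & ~~ (z <= o)].
Proof.
move=> ao; pose S := [pred z : L | (z <= a) && ~~ (z <= o)].
have Sa : S a by rewrite /S /= lexx.
case: (arg_minnP down_card Sa) => z /andP[za zo] zmin.
exists z; split=> // x y zxy.
have [->|nzx] := eqVneq z x; first by left.
have [->|nzy] := eqVneq z y; first by right.
have below_o v : v < z -> v <= o.
  move=> vz; apply: contraTT (down_card_lt vz) => vo; rewrite -leqNgt.
  by apply: zmin; rewrite /S /= vo (le_trans (ltW vz) za).
have xo : x <= o by apply: below_o; rewrite lt_def nzx zxy leUl.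
have yo : y <= o by apply: below_o; rewrite lt_def nzy zxy leUr.
by move: zo; rewrite zxy leUx xo yo.
Qed.

Lemma meet_irr_above a b : ~~ (b <= a) -> exists u, [/\ meet_irr u, a <= u & ~~ (b <= u)].
Proof.
move=> ba; pose S := [pred u : L | (a <= u) && ~~ (b <= u)].
have Sa : S a by rewrite /S /= lexx.
case: (arg_maxnP down_card Sa) => u /andP[au bu] umax.
exists u; split=> // x y uxy.
have [->|nux] := eqVneq u x; first by left.
have [->|nuy] := eqVneq u y; first by right.
have above_b v : u < v -> b <= v.
  move=> uv; apply: contraTT (down_card_lt uv) => bv; rewrite -leqNgt.
  by apply: umax; rewrite /S /= bv (le_trans au (ltW uv)).
have bx : b <= x by apply: above_b; rewrite lt_def eq_sym nux uxy leIl.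
have b_y : b <= y by apply: above_b; rewrite lt_def eq_sym nuy uxy leIr.
by move: bu; rewrite uxy lexI bx b_y.
Qed.

Hypothesis sl : slim (T := L).

Lemma slim_no_meet_triple o x y z :
  x `&` y <= o -> y `&` z <= o -> x `&` z <= o ->
  ~~ (x <= o) -> ~~ (y <= o) -> ~~ (z <= o) -> False.
Proof.
have incomp_outside p q u v : p <= u -> q <= v -> u `&` v <= o ->
    ~~ (p <= o) -> ~~ (q <= o) -> incomp p q.
  move=> pu qv uvo po qo; split=> pq.
    by move/negP: po; apply; apply: le_trans uvo; rewrite lexI pu (le_trans pq qv).
  by move/negP: qo; apply; apply: le_trans uvo; rewrite lexI (le_trans pq pu) qv.
move=> xy yz xz xo yo zo.
have [jx [jxi jxx jxo]] := join_irr_below xo.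
have [jy [jyi jyy jyo]] := join_irr_below yo.
have [jz [jzi jzz jzo]] := join_irr_below zo.
apply: (sl jxi jyi jzi); split; [|split].
- exact: incomp_outside jxx jyy xy jxo jyo.
- exact: incomp_outside jyy jzz yz jyo jzo.
- exact: incomp_outside jxx jzz xz jxo jzo.
Qed.

Lemma slim_cover_le o a b w : covers o a -> covers o b -> a != b -> o < w ->
  (a <= w) || (b <= w).
Proof.
move=> oa ob nab ow; apply/contraT; rewrite negb_or => /andP[aw bw]; exfalso.
apply: (slim_no_meet_triple (o := o) (x := a) (y := b) (z := w)).
- exact: covers_meet_le oa (covers_le ob) (covers_nle oa ob nab).
- exact: covers_meet_le ob (ltW ow) bw.
- exact: covers_meet_le oa (ltW ow) aw.
- by rewrite (lt_geF (covers_lt oa)).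
- by rewrite (lt_geF (covers_lt ob)).
- by rewrite (lt_geF ow).
Qed.

Lemma slim_join_cover o x y w : covers o x -> covers o y -> x != y ->
  y <= x `|` w -> y <= o `|` w.
Proof.
move=> ox oy nxy yxw; apply/negPn/negP => yW.
have xW : ~~ (x <= o `|` w).
  by apply: contra yW => xW; apply: le_trans yxw _; rewrite leUx xW leUr.
have [ow|ow] := eqVneq (o `|` w) o.
  have wo : w <= o by rewrite -ow leUr.
  have yx : y <= x by rewrite (le_trans yxw) // leUx lexx (le_trans wo (covers_le ox)).
  by move: nxy; rewrite (covers_le_eq oy ox yx) eqxx.
have o_ow : o < o `|` w by rewrite lt_def ow leUl.
by move: (slim_cover_le ox oy nxy o_ow); rewrite (negbTE xW) (negbTE yW).
Qed.

End Slim.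

Section Grid.
Context {disp : Order.disp_t} {L : finTBLatticeType disp}.
Variables (c d : nat -> L) (n : nat).
Hypotheses (hc : cover_chain c n) (hd : cover_chain d n).

Lemma eta_succ1 i j : c i <= c i.+1 -> eta c d (i.+1, j) = eta c d (i, j) `|` c i.+1.
Proof. by move=> ci; rewrite /eta /= joinAC (join_idPr ci). Qed.

Lemma eta_succ2 i j : d j <= d j.+1 -> eta c d (i, j.+1) = eta c d (i, j) `|` d j.+1.
Proof. by move=> dj; rewrite /eta /= -joinA (join_idPr dj). Qed.

Hypothesis sm : semimodular (T := L).

Lemma eta_step1 i j : (i < n)%N -> cover_or_eq (eta c d (i, j)) (eta c d (i.+1, j)).
Proof.
case: hc => _ _ cov i_n; rewrite /eta /=.
exact: (semimodular_join_cover (d j) sm (cov i i_n)).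
Qed.

Lemma eta_step2 i j : (j < n)%N -> cover_or_eq (eta c d (i, j)) (eta c d (i, j.+1)).
Proof.
case: hd => _ _ cov j_n; rewrite /eta /= ![c i `|` _]joinC.
exact: (semimodular_join_cover (c i) sm (cov j j_n)).
Qed.

Lemma grid_square_balanced i j : (i < n)%N -> (j < n)%N ->
  ((eta c d (i, j) != eta c d (i.+1, j)) + (eta c d (i.+1, j) != eta c d (i.+1, j.+1)) =
   (eta c d (i, j) != eta c d (i, j.+1)) + (eta c d (i, j.+1) != eta c d (i.+1, j.+1)))%N.
Proof.
move=> i_n j_n; have ci := cover_chain_step hc i_n; have dj := cover_chain_step hd j_n.
apply: square_balanced (eta_step1 _ i_n) (eta_step2 _ j_n) _ _ _ _.
- exact: (eta_step2 _ j_n).1.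
- exact: (eta_step1 _ i_n).1.
- by move=> e; rewrite !eta_succ2 // e.
- by move=> e; rewrite !eta_succ1 // e.
Qed.

(* [source i j]: the grid square with top c_(i+1) ∨ d_(j+1) is a source cell of β_D,
   i.e. π3(i+1) = j+1. *)
Definition source i j : bool :=
  (eta c d (i, j) != eta c d (i.+1, j)) && (eta c d (i, j.+1) == eta c d (i.+1, j.+1)).

Lemma sourceE i j : (i < n)%N -> (j < n)%N ->
  source i j = (eta c d (i, j) != eta c d (i, j.+1)) && (eta c d (i.+1, j) == eta c d (i.+1, j.+1)).
Proof.
move=> i_n j_n; have bal (a b p e : bool) : (a + b = p + e)%N -> a && ~~ e = p && ~~ b.
  by case: a b p e => [] [] [] [].
rewrite /source -[eta c d (i, j.+1) == _]negbK -[eta c d (i.+1, j) == _]negbK.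
exact: bal (grid_square_balanced i_n j_n).
Qed.

Lemma eta_eq1_mono i j k : (j <= k)%N -> (k <= n)%N ->
  eta c d (i, j) = eta c d (i.+1, j) -> eta c d (i, k) = eta c d (i.+1, k).
Proof.
elim: k => [|k IH] jk k_n; first by move: jk; rewrite leqn0 => /eqP ->.
move: jk; rewrite leq_eqVlt => /orP[/eqP -> //|jk] e.
by rewrite !eta_succ2 ?(cover_chain_step hd k_n) // (IH jk (ltnW k_n) e).
Qed.

Lemma eta_eq2_mono i j k : (i <= k)%N -> (k <= n)%N ->
  eta c d (i, j) = eta c d (i, j.+1) -> eta c d (k, j) = eta c d (k, j.+1).
Proof.
elim: k => [|k IH] ik k_n; first by move: ik; rewrite leqn0 => /eqP ->.
move: ik; rewrite leq_eqVlt => /orP[/eqP -> //|ik] e.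
by rewrite !eta_succ1 ?(cover_chain_step hc k_n) // (IH ik (ltnW k_n) e).
Qed.

Lemma source_row_uniq i j k : (j < n)%N -> (k < n)%N -> source i j -> source i k -> j = k.
Proof.
move=> j_n k_n /andP[nj /eqP ej] /andP[nk /eqP ek].
have [jk|kj|//] := ltngtP j k.
  by rewrite (eta_eq1_mono jk (ltnW k_n) ej) eqxx in nk.
by rewrite (eta_eq1_mono kj (ltnW j_n) ek) eqxx in nj.
Qed.

Lemma source_col_uniq i k j : (i < n)%N -> (k < n)%N -> (j < n)%N ->
  source i j -> source k j -> i = k.
Proof.
move=> i_n k_n j_n; rewrite (sourceE i_n j_n) (sourceE k_n j_n).
move=> /andP[ni /eqP ei] /andP[nk /eqP ek].
have [ik|ki|//] := ltngtP i k.
  by rewrite (eta_eq2_mono ik (ltnW k_n) ei) eqxx in nk.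
by rewrite (eta_eq2_mono ki (ltnW i_n) ek) eqxx in ni.
Qed.

Lemma source_exists i : (i < n)%N -> exists2 j, (j < n)%N & source i j.
Proof.
case: hc hd => c0 cn cov [d0 dn _] i_n.
pose proper k := eta c d (i, k) != eta c d (i.+1, k).
have proper0 : proper 0%N by rewrite /proper /eta /= d0 !joinx0 (covers_neq (cov i i_n)).
have improper_n : ~~ proper n by rewrite /proper /eta /= dn !joinx1 eqxx.
have [k k_proper k_min] := ex_minnP (ex_intro (fun k => ~~ proper k) n improper_n).
case: k k_proper k_min => [|j] j_improper j_min; first by rewrite proper0 in j_improper.
have proper_j : proper j by apply: contraT => /j_min; rewrite ltnn.
exists j; first exact: j_min _ improper_n.
by move: j_improper; rewrite /source /proper negbK => ->; rewrite andbT.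
Qed.

Lemma source_perm : exists s : {perm 'I_n}, forall i j : 'I_n, s i = j <-> source i j.
Proof.
pose f (i : 'I_n) := odflt i [pick j : 'I_n | source i j].
have f_source (i : 'I_n) : source i (f i).
  rewrite /f; case: pickP => [//|none]; have [j j_n src] := source_exists (ltn_ord i).
  by move: (none (Ordinal j_n)); rewrite src.
have f_inj : injective f.
  move=> i k fik; apply/val_inj/(source_col_uniq (ltn_ord i) (ltn_ord k) (ltn_ord (f i))).
    exact: f_source.
  by rewrite fik; exact: f_source.
exists (perm f_inj) => i j; rewrite permE; split=> [<-|src]; first exact: f_source.
exact/val_inj/(source_row_uniq (ltn_ord _) (ltn_ord _) (f_source i) src).
Qed.

Lemma pi3_rel_source i j : (i < n)%N -> (j < n)%N -> pi3_rel c d i.+1 j.+1 <-> source i j.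
Proof.
move=> i_n j_n; rewrite /pi3_rel /source_cell /beta_D /=; split.
  by case=> _ _ e1 e2 ne; rewrite /source e1 eqxx andbT; apply/eqP; rewrite e2.
move=> src; have := src; rewrite (sourceE i_n j_n) => /andP[_ /eqP e2].
case/andP: src => ne /eqP e1; split=> // e; move/eqP: ne; apply.
by rewrite e2 e.
Qed.

Hypothesis sl : slim (T := L).

Lemma source_of_pi2_rel i j : (i < n)%N -> (j < n)%N -> pi2_rel c d n i.+1 j.+1 -> source i j.
Proof.
move=> i_n j_n [u [u_mi u_top [_ ci1u ciu] [_ dj1u dju]]].
set o := eta c d (i, j); set a := eta c d (i.+1, j); set b := eta c d (i, j.+1).
have ou : o <= u by rewrite /o /eta leUx ciu ?dju.
have au : ~~ (a <= u) by apply/negP=> au; apply/ci1u/le_trans/au; rewrite leUl.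
have bu : ~~ (b <= u) by apply/negP=> bu; apply/dj1u/le_trans/bu; rewrite leUr.
have noa : o != a by apply: contraNneq au => <-.
have nob : o != b by apply: contraNneq bu => <-.
have oa := (eta_step1 j i_n).2 noa; have ob := (eta_step2 i j_n).2 nob.
(* Otherwise u would lie above neither of the two distinct upper covers a, b of o <= u. *)
have a_b : a = b.
  apply/eqP/contraT => nab.
  have [o_u|ne_ou] := eqVneq o u.
    have u_ab : u = a `&` b.
      apply: le_anti; rewrite -o_u lexI (covers_le oa) (covers_le ob) /=.
      exact: (covers_meet_le oa (covers_le ob) (covers_nle oa ob nab)).
    by case: (u_mi _ _ u_ab) => e; [move: au | move: bu]; rewrite -e lexx.
  have o_lt_u : o < u by rewrite lt_def eq_sym ne_ou ou.
  by move: (slim_cover_le sl oa ob nab o_lt_u); rewrite (negbTE au) (negbTE bu).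
rewrite /source noa /= (eta_succ2 i.+1 (cover_chain_step hd j_n)) -/a a_b.
by apply/eqP/esym/join_idPl; rewrite /b /eta leUr.
Qed.

Lemma pi2_rel_of_source i j : (i < n)%N -> (j < n)%N -> source i j -> pi2_rel c d n i.+1 j.+1.
Proof.
move=> i_n j_n src.
have ci1_ci : ~~ (c i.+1 <= c i) by case: hc => _ _ cov; rewrite (lt_geF (covers_lt (cov i i_n))).
have [u [u_mi ciu ci1u]] := meet_irr_above ci1_ci.
have ut : u != \top by apply: contraNneq ci1u => ->; rewrite lex1.
have [k k_n dk] := smallest_not_le_exists hd ut.
have ck : smallest_not_le c n u i.+1.
  split=> [//||m]; first exact/negP.
  rewrite ltnS => mi.
  exact: le_trans (cover_chain_le hc mi (ltnW i_n)) ciu.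
have rel : pi2_rel c d n i.+1 k.+1 by exists u; split=> //; exact/eqP.
by rewrite (source_row_uniq j_n k_n src (source_of_pi2_rel i_n k_n rel)).
Qed.

Lemma pi2_rel_source i j : (i < n)%N -> (j < n)%N -> pi2_rel c d n i.+1 j.+1 <-> source i j.
Proof. by move=> i_n j_n; split; [exact: source_of_pi2_rel | exact: pi2_rel_of_source]. Qed.

End Grid.

Section Planar.
Context {disp : Order.disp_t} {L : finTBLatticeType disp}.
Variables (lr : L -> L -> Prop) (c d : nat -> L) (n : nat).
Hypothesis pd : planar_diagram lr.

Lemma planar_lr_neq x y : lr x y -> x != y.
Proof. by case: pd => lr_incomp _ _ _ _ /lr_incomp[xy _]; apply/eqP => e; apply/xy; rewrite e. Qed.

Definition edge_collapses (w : L) (e : L * L) : bool := e.1 `|` w == e.2 `|` w.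

Hypothesis sl : slim (T := L).

(* The top of the cell is a ∨ b, so each side compares a corner with w joined to o or to the other
   corner; [slim_join_cover] makes the two comparisons agree. *)
Lemma traj_step_collapses w e e' : traj_step lr e e' -> edge_collapses w e = edge_collapses w e'.
Proof.
case=> [o [a [b [t [[oa at_ ob bt [lab _]] edges]]]]].
have nab := planar_lr_neq lab; have nba : b != a by rewrite eq_sym.
have tE := covers_join at_ bt nab.
case: edges => [[-> ->]|[-> ->]]; rewrite /edge_collapses /=.
- rewrite (join_eq_le w (covers_le oa)) (join_eq_le w (covers_le bt)) -tE leUx leUl andbT.
  apply/idP/idP => [ao_w|]; last exact: (slim_join_cover sl ob oa nba).
  by apply: le_trans ao_w _; rewrite leUx leUr (le_trans (covers_le ob) (leUl _ _)).
- rewrite (join_eq_le w (covers_le at_)) (join_eq_le w (covers_le ob)) -tE leUx leUl /=.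
  apply/idP/idP => [|bo_w]; first exact: (slim_join_cover sl oa ob nab).
  by apply: le_trans bo_w _; rewrite leUx leUr (le_trans (covers_le oa) (leUl _ _)).
Qed.

Lemma trajectory_collapses w e e' :
  clos_refl_trans (traj_step lr) e e' -> edge_collapses w e = edge_collapses w e'.
Proof.
by elim=> // [x y /(traj_step_collapses w)|x y z _ -> _].
Qed.

Hypotheses (lb : left_boundary lr c n) (rb : right_boundary lr d n).

Lemma left_boundary_chain : cover_chain c n.
Proof. by case: lb. Qed.

Lemma right_boundary_chain : cover_chain d n.
Proof. by case: rb. Qed.

Let hc := left_boundary_chain.
Let hd := right_boundary_chain.

Hypothesis sm : semimodular (T := L).

Lemma source_of_pi1_rel i j : (i < n)%N -> (j < n)%N -> pi1_rel lr c d i.+1 j.+1 -> source c d i j.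
Proof.
move=> i_n j_n [es [steps es_last _]].
have traj : clos_refl_trans (traj_step lr) (c i, c i.+1) (d j, d j.+1).
  by apply/clos_refl_transP; exists es.
have ci := cover_chain_step hc i_n.
have nci : (c i == c i.+1) = false by case: hc => _ _ cov; apply/negbTE/covers_neq/cov.
move: (trajectory_collapses (c i) traj) (trajectory_collapses (c i.+1) traj).
rewrite /edge_collapses /= !joinxx (join_idPl ci) nci (join_idPr ci) eqxx => k1 k2.
rewrite (sourceE hc hd sm i_n j_n) /eta /=.
by rewrite !(joinC (c _)) -k1 -k2.
Qed.

Lemma planar_cover_join_lr x a b m l : (m <= n)%N -> (l <= n)%N ->
  covers x a -> covers x b -> a != b -> a = x `|` c m -> b = x `|` d l -> lr a b.
Proof.
move=> m_n l_n xa xb nab aE bE.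
case: pd => lr_incomp lr_total lr_asym lr_trans lr_trans_inv.
case: lb => _ _ _ left_lr; case: rb => _ _ _ right_lr.
have nle_ab := covers_nle xa xb nab.
have nle_ba : ~~ (b <= a) by apply: covers_nle xb xa _; rewrite eq_sym.
have lr_le p q : lr p q -> p <= q -> False by move=> /lr_incomp[].
have lr_ge p q : lr p q -> q <= p -> False by move=> /lr_incomp[].
case: (lr_total a b) => //; first by split; apply/negP.
move=> lr_ba; exfalso.
have cm_a : c m <= a by rewrite aE leUr.
have dl_b : d l <= b by rewrite bE leUr.
have lr_cm_b : lr (c m) b.
  apply: left_lr m_n _; split=> le.
    by move/negP: nle_ab; apply; rewrite aE leUx (covers_le xb) le.
  by move/negP: nle_ba; apply; exact: le_trans le cm_a.
have lr_a_dl : lr a (d l).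
  apply: right_lr l_n _; split=> le.
    by move/negP: nle_ba; apply; rewrite bE leUx (covers_le xa) le.
  by move/negP: nle_ab; apply; exact: le_trans le dl_b.
have a_cm : a = c m.
  case: (lr_trans_inv a b (c m) (or_intror lr_ba) (or_intror lr_cm_b)) => [a_le|].
    by apply: le_anti; rewrite a_le cm_a.
  by move=> /lr_le/(_ cm_a).
have b_dl : b = d l.
  case: (lr_trans b a (d l) (or_intror lr_ba) (or_intror lr_a_dl)) => [b_le|].
    by apply: le_anti; rewrite b_le dl_b.
  by move=> /lr_ge/(_ dl_b).
rewrite a_cm b_dl in lr_ba.
by apply: (lr_asym (c m) (d l)); split=> //; apply: left_lr m_n _; case: (lr_incomp _ _ lr_ba).
Qed.

Lemma cell_of_covers o a b t : covers o a -> covers a t -> covers o b -> covers b t ->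
  lr a b -> cell lr o a b t.
Proof.
move=> oa at_ ob bt lab; split=> //; split=> // x ox xt xa xb _.
have nle_top y : covers y t -> x <> y -> ~~ (y <= x).
  move=> yt xy; apply/negP => y_le_x.
  case: (covers_between yt y_le_x (ltW xt)) => [//|x_t].
  by rewrite x_t ltxx in xt.
move: (slim_cover_le sl oa ob (planar_lr_neq lab) ox).
by rewrite (negbTE (nle_top a at_ xa)) (negbTE (nle_top b bt xb)).
Qed.

Lemma grid_cell i k : (i < n)%N -> (k < n)%N ->
  eta c d (i, k) != eta c d (i.+1, k) -> eta c d (i, k) != eta c d (i, k.+1) ->
  eta c d (i.+1, k) != eta c d (i.+1, k.+1) ->
  cell lr (eta c d (i, k)) (eta c d (i.+1, k)) (eta c d (i, k.+1)) (eta c d (i.+1, k.+1)).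
Proof.
move=> i_n k_n noa nob nat.
have nbt : eta c d (i, k.+1) != eta c d (i.+1, k.+1).
  by move: (grid_square_balanced hc hd sm i_n k_n); rewrite noa nob nat; case: (_ != _).
have ci := cover_chain_step hc i_n; have dk := cover_chain_step hd k_n.
have oa := (eta_step1 d hc sm k i_n).2 noa; have ob := (eta_step2 c hd sm i k_n).2 nob.
have at_ := (eta_step2 c hd sm i.+1 k_n).2 nat.
have bt := (eta_step1 d hc sm k.+1 i_n).2 nbt.
apply: (cell_of_covers oa at_ ob bt).
apply: (planar_cover_join_lr i_n k_n oa ob _ (eta_succ1 d k ci) (eta_succ2 c i dk)).
apply: contraNneq nat => a_b; rewrite (eta_succ2 c i.+1 dk) join_l ?eqxx //.
by rewrite a_b /eta leUr.
Qed.

Lemma source_row_trajectory i j : (i < n)%N -> (j < n)%N -> source c d i j ->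
  forall k, (k <= j)%N -> clos_refl_trans (traj_step lr)
    (eta c d (i, 0), eta c d (i.+1, 0)) (eta c d (i, k), eta c d (i.+1, k)).
Proof.
move=> i_n j_n /andP[nij /eqP eij].
have proper k : (k <= j)%N -> eta c d (i, k) != eta c d (i.+1, k).
  by move=> kj; apply: contraNneq nij => /(eta_eq1_mono hd kj (ltnW j_n)) ->.
elim=> [_|k IH kj]; first exact: rt_refl.
have k_n := leq_trans kj (ltnW j_n).
apply: rt_trans (IH (ltnW kj)) _.
have [ob|nob] := eqVneq (eta c d (i, k)) (eta c d (i, k.+1)).
  by rewrite -ob -(eta_eq2_mono hc (leqnSn i) i_n ob); exact: rt_refl.
have nat : eta c d (i.+1, k) != eta c d (i.+1, k.+1).
  move: (grid_square_balanced hc hd sm i_n k_n).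
  by rewrite (proper k (ltnW kj)) nob (proper k.+1 kj); case: (_ != _).
apply: rt_step; do 4 eexists; split; first exact: grid_cell (proper k (ltnW kj)) nob nat.
by left.
Qed.

Lemma source_col_trajectory i j : (i < n)%N -> (j < n)%N -> source c d i j ->
  forall m, (m <= i)%N -> clos_refl_trans (traj_step lr)
    (eta c d (m, j), eta c d (m, j.+1)) (eta c d (0, j), eta c d (0, j.+1)).
Proof.
move=> i_n j_n; rewrite (sourceE hc hd sm i_n j_n) => /andP[nij /eqP eij].
have proper m : (m <= i)%N -> eta c d (m, j) != eta c d (m, j.+1).
  by move=> mi; apply: contraNneq nij => /(eta_eq2_mono hc mi (ltnW i_n)) ->.
elim=> [_|m IH mi]; first exact: rt_refl.
have m_n := leq_trans mi (ltnW i_n).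
apply: rt_trans _ (IH (ltnW mi)).
have [oa|noa] := eqVneq (eta c d (m, j)) (eta c d (m.+1, j)).
  by rewrite -oa -(eta_eq1_mono hd (leqnSn j) j_n oa); exact: rt_refl.
apply: rt_step; do 4 eexists; split.
  exact: grid_cell noa (proper m (ltnW mi)) (proper m.+1 mi).
by right.
Qed.

Lemma right_boundary_stuck j e : (j < n)%N -> ~ traj_step lr (d j, d j.+1) e.
Proof.
move=> j_n [o [a [b [t [[_ _ _ _ [lab _]] edges]]]]].
case: pd => lr_incomp _ lr_asym _ _; case: rb => _ _ _ right_lr.
have not_right k : (k <= n)%N -> a <> d k.
  move=> k_n ak; rewrite ak in lab.
  by apply: (lr_asym (d k) b); split=> //; apply: right_lr k_n (lr_incomp _ _ lab).
case: edges => [[[_ da] _]|[[da _] _]].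
- exact: not_right j_n (esym da).
- exact: not_right (ltnW j_n) (esym da).
Qed.

Lemma pi1_rel_of_source i j : (i < n)%N -> (j < n)%N -> source c d i j -> pi1_rel lr c d i.+1 j.+1.
Proof.
move=> i_n j_n src.
have junction : (eta c d (i, j), eta c d (i.+1, j)) = (eta c d (i, j), eta c d (i, j.+1)).
  move: (src); rewrite (sourceE hc hd sm i_n j_n) => /andP[_ /eqP ->].
  by case/andP: src => _ /eqP ->.
have traj : clos_refl_trans (traj_step lr) (c i, c i.+1) (d j, d j.+1).
  have row := source_row_trajectory i_n j_n src (leqnn j).
  have col := source_col_trajectory i_n j_n src (leqnn i).
  rewrite junction in row; move: (rt_trans row col).
  by case: hc hd => c0 _ _ [d0 _ _]; rewrite /eta /= c0 d0 !joinx0 !join0x.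
move/clos_refl_transP: traj => [es [steps es_last]].
by exists es; split=> // e; rewrite es_last; exact: right_boundary_stuck.
Qed.

Lemma pi1_rel_source i j : (i < n)%N -> (j < n)%N -> pi1_rel lr c d i.+1 j.+1 <-> source c d i j.
Proof. by move=> i_n j_n; split; [exact: source_of_pi1_rel | exact: pi1_rel_of_source]. Qed.

End Planar.

Theorem proposition2p7 (disp : Order.disp_t) (L : finTBLatticeType disp)
  (n : nat) (lr : L -> L -> Prop) (c d : nat -> L) :
  slim (T := L) -> semimodular (T := L) -> lattice_length (T := L) n ->
  planar_diagram lr -> left_boundary lr c n -> right_boundary lr d n ->
  exists s : {perm 'I_n}, forall i j : 'I_n,
    [/\ pi1_rel lr c d i.+1 j.+1 <-> s i = j,
        pi2_rel c d n i.+1 j.+1 <-> s i = j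
      & pi3_rel c d i.+1 j.+1 <-> s i = j].
Proof.
move=> sl sm _ pd lb rb.
have hc := left_boundary_chain lb; have hd := right_boundary_chain rb.
have [s sP] := source_perm hc hd sm.
exists s => i j; have i_n := ltn_ord i; have j_n := ltn_ord j.
split; apply: iff_trans (iff_sym (sP i j)).
- exact: pi1_rel_source pd sl lb rb sm _ _ i_n j_n.
- exact: pi2_rel_source hc hd sm sl _ _ i_n j_n.
- exact: pi3_rel_source hc hd sm _ _ i_n j_n.
Qed.
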